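(* Suppose that $q\in(0,1)$ and $d\in\mathbb N$. Then for every symmetric positive semidefinite $A,B\in M_d(\mathbb R)$, $$\mathrm{trace}\big((A+B)^qA\big)\le\mathrm{trace}(A^{q+1})+\mathrm{trace}(B^qA).$$
   Context: Powers of positive semidefinite matrices are defined by functional calculus. *)

(* real d x d matrices represented as nat -> nat -> R,
   only entries with indices < d are meaningful. *)
From Stdlib Require Import Reals Lra.
Open Scope R_scope.

Definition mat := nat -> nat -> R.

Fixpoint rsum (d : nat) (f : nat -> R) : R :=
  match d with
  | O => 0
  | S n => rsum n f + f n
  end.

Definition madd (A B : mat) : mat := fun i j => A i j + B i j.
Definition mmul (d : nat) (A B : mat) : mat :=
  fun i j => rsum d (fun k => A i k * B k j).
Definition mtr (A : mat) : mat := fun i j => A j i.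
Definition trace (d : nat) (A : mat) : R := rsum d (fun i => A i i).
Definition idm : mat := fun i j => if Nat.eqb i j then 1 else 0.

Definition symmetric (d : nat) (A : mat) : Prop :=
  forall i j, (i < d)%nat -> (j < d)%nat -> A i j = A j i.

Definition psd (d : nat) (A : mat) : Prop :=
  symmetric d A /\
  forall x : nat -> R, 0 <= rsum d (fun i => rsum d (fun j => x i * A i j * x j)).

Definition orthogonal (d : nat) (U : mat) : Prop :=
  (forall i j, (i < d)%nat -> (j < d)%nat -> mmul d U (mtr U) i j = idm i j) /\
  (forall i j, (i < d)%nat -> (j < d)%nat -> mmul d (mtr U) U i j = idm i j).

(* real power t^p of a nonnegative real, with 0^p = 0 (p > 0) *)
Definition rpow (t p : R) : R := if Rle_dec t 0 then 0 else Rpower t p.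

Definition is_mpow (d : nat) (p : R) (A P : mat) : Prop :=
  exists (U : mat) (lam : nat -> R),
    orthogonal d U /\
    (forall k, (k < d)%nat -> 0 <= lam k) /\
    (forall i j, (i < d)%nat -> (j < d)%nat ->
        A i j = rsum d (fun k => U i k * lam k * U j k)) /\
    (forall i j, (i < d)%nat -> (j < d)%nat ->
        P i j = rsum d (fun k => U i k * rpow (lam k) p * U j k)).

(* For 0 < q < 1 and t >= 0, t^q = c_q * Int_0^oo t/(t+s) s^(q-1) ds with c_q > 0.  Integrating in s,
   the theorem follows from the resolvent inequality, for C = A + B and every s > 0,
     tr (C (C+s)^-1 A) <= tr (A (A+s)^-1 A) + tr (B (B+s)^-1 A).
   Since X (X+s)^-1 = 1 - s (X+s)^-1 and (B+s)^-1 - (C+s)^-1 = (B+s)^-1 A (C+s)^-1, this amounts to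
   s tr ((B+s)^-1 A (C+s)^-1 A) <= tr (A (A+s)^-1 A), which holds because s (B+s)^-1 <= 1 and
   (C+s)^-1 <= (A+s)^-1 in the Loewner order.
   In a spectral basis each trace is a finite combination sum_k w_k f(lambda_k), so the integration is
   carried out on such combinations; rather than computing c_q, the integral is truncated to [e, 1/e]
   and the tails are bounded explicitly as e -> 0. *)

From Pilot Require Import Defs.
From Stdlib Require Import Reals Lra.
From Coquelicot Require Import Coquelicot.
From mathcomp Require Import all_boot all_order all_algebra.
From mathcomp Require Import Rstruct.
Import Order.TTheory GRing.Theory Num.Theory.
Open Scope R_scope.

Lemma Rpower_gt0 x y : 0 < Rpower x y.
Proof. exact: exp_pos. Qed.

Lemma Rpower_Sr x y : 0 < x -> Rpower x (y + 1) = x * Rpower x y.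
Proof. by move=> hx; rewrite Rpower_plus Rpower_1 // Rmult_comm. Qed.

Lemma Rpower_le_nonpos a b y : y <= 0 -> 0 < a <= b -> Rpower b y <= Rpower a y.
Proof.
move=> hy hab; rewrite -(Ropp_involutive y) (Rpower_Ropp b) (Rpower_Ropp a).
apply: Rinv_le_contravar; first exact: Rpower_gt0.
apply: Rle_Rpower_l; lra.
Qed.

Definition kernel q u := Rpower u (q - 1) / (1 + u).
Definition scaled_kernel q t s := t / (t + s) * Rpower s (q - 1).

Lemma ex_RInt_kernel q a b : 0 < a -> 0 < b -> ex_RInt (kernel q) a b.
Proof.
move=> ha hb; apply: (@ex_RInt_continuous R_CompleteNormedModule) => z hz.
have := Rmin_pos a b ha hb => hm.
apply: (ex_derive_continuous (kernel q)); rewrite /kernel /Rpower; auto_derive; lra.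
Qed.

Lemma ex_RInt_scaled_kernel q t a b : 0 <= t -> 0 < a -> 0 < b ->
  ex_RInt (scaled_kernel q t) a b.
Proof.
move=> ht ha hb; apply: (@ex_RInt_continuous R_CompleteNormedModule) => z hz.
have := Rmin_pos a b ha hb => hm.
apply: (ex_derive_continuous (scaled_kernel q t)); rewrite /scaled_kernel /Rpower.
auto_derive; lra.
Qed.

Lemma RInt_scaled_kernel q t a b : 0 < t -> 0 < a -> 0 < b ->
  RInt (scaled_kernel q t) a b = Rpower t q * RInt (kernel q) (a / t) (b / t).
Proof.
move=> ht ha hb.
have hat : 0 < a / t by apply: Rdiv_lt_0_compat.
have hbt : 0 < b / t by apply: Rdiv_lt_0_compat.
have E := RInt_comp_lin (scaled_kernel q t) t 0 (a / t) (b / t).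
have Ea : t * (a / t) + 0 = a by field; lra.
have Eb : t * (b / t) + 0 = b by field; lra.
rewrite Ea Eb in E; rewrite -E; last by apply: ex_RInt_scaled_kernel => //; lra.
rewrite -[_ * RInt _ _ _]/(scal (Rpower t q) (RInt (kernel q) (a / t) (b / t))).
rewrite -RInt_scal; last exact: ex_RInt_kernel.
apply: RInt_ext => y hy; have hy0 : 0 < y by have := Rmin_pos _ _ hat hbt; lra.
rewrite /scal /= /mult /= /scaled_kernel /kernel Rplus_0_r -Rpower_mult_distr //.
have -> : Rpower t q = t * Rpower t (q - 1) by rewrite -Rpower_Sr //; f_equal; ring.
have := Rpower_gt0 t (q - 1); have := Rpower_gt0 y (q - 1) => p1 p2.
field; split; [lra | apply: Rgt_not_eq; nra].
Qed.

Lemma kernel_ge0 q u : 0 < u -> 0 <= kernel q u.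
Proof.
move=> hu; have := Rpower_gt0 u (q - 1).
rewrite /kernel => p; apply: Rle_mult_inv_pos; lra.
Qed.

Lemma kernel_le_pow q u : 0 < u -> kernel q u <= Rpower u (q - 1).
Proof.
move=> hu; have := Rpower_gt0 u (q - 1) => p.
apply: (Rmult_le_reg_r (1 + u)); rewrite /kernel; first lra.
field_simplify; [nra | lra].
Qed.

Lemma kernel_le_pow_pred q u : 0 < u -> kernel q u <= Rpower u (q - 2).
Proof.
move=> hu; have := Rpower_gt0 u (q - 2) => p.
have -> : kernel q u = u * Rpower u (q - 2) / (1 + u).
  by rewrite /kernel -Rpower_Sr //; do 2 f_equal; ring.
apply: (Rmult_le_reg_r (1 + u)); first lra.
field_simplify; [nra | lra].
Qed.

Lemma abs_RInt_kernel_le q u v m r : 0 < m -> m <= u -> m <= v -> r <= 0 ->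
  (forall s, 0 < s -> kernel q s <= Rpower s r) ->
  Rabs (RInt (kernel q) u v) <= Rabs (v - u) * Rpower m r.
Proof.
move=> hm hu hv hr hk.
have key a b : m <= a <= b -> Rabs (RInt (kernel q) a b) <= Rabs (b - a) * Rpower m r.
  move=> hab; rewrite (Rabs_pos_eq (b - a)); last lra.
  apply: abs_RInt_le_const; [lra | apply: ex_RInt_kernel; lra |].
  move=> t ht; rewrite Rabs_pos_eq; last by apply: kernel_ge0; lra.
  apply: Rle_trans (hk t _) (Rpower_le_nonpos _ _ _ hr _); lra.
have [huv | hvu] := Rle_dec u v; first by apply: key; lra.
rewrite -opp_RInt_swap; last by apply: ex_RInt_kernel; lra.
by rewrite /opp /= Rabs_Ropp Rabs_minus_sym; apply: key; lra.
Qed.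

Lemma RInt_kernel_ge q e : 0 < q < 1 -> 0 < e <= / 2 -> / 4 <= RInt (kernel q) e (/ e).
Proof.
move=> hq he.
have hie : 2 <= / e.
  by rewrite -[2]Rinv_inv; apply: Rinv_le_contravar; lra.
have ex a b : 0 < a -> 0 < b -> ex_RInt (kernel q) a b by apply: ex_RInt_kernel.
have RInt_ge c a b : a <= b -> 0 < a -> (forall x, a <= x <= b -> c <= kernel q x) ->
    (b - a) * c <= RInt (kernel q) a b.
  move=> hab ha hc; have := RInt_le (fun _ => c) (kernel q) a b hab.
  rewrite RInt_const /scal /= /mult /= Rmult_comm; apply.
  - exact: ex_RInt_const.
  - by apply: ex; lra.
  - by move=> x hx; apply: hc; lra.
have kernel_nonneg a b : 0 < a -> (forall x, a <= x <= b -> 0 <= kernel q x).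
  by move=> ha x hx; apply: kernel_ge0; lra.
rewrite -(RInt_Chasles (kernel q) e (/ 2) (/ e)); try (apply: ex; lra).
rewrite -(RInt_Chasles (kernel q) (/ 2) 2 (/ e)); try (apply: ex; lra).
have z1 := RInt_ge 0 e (/ 2) (proj2 he) (proj1 he) (kernel_nonneg _ _ (proj1 he)).
have z3 := RInt_ge 0 2 (/ e) hie Rlt_0_2 (kernel_nonneg _ _ Rlt_0_2).
have z2 : (2 - / 2) * / 6 <= RInt (kernel q) (/ 2) 2.
  apply: RInt_ge; try lra; move=> x hx; rewrite /kernel.
  have h1 : / 2 <= Rpower x (q - 1).
    apply: (Rle_trans _ (Rpower 2 (q - 1))); last by apply: Rpower_le_nonpos; lra.
    have <- : Rpower 2 (- 1) = / 2 by rewrite Rpower_Ropp Rpower_1 //; lra.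
    apply: Rle_Rpower; lra.
  apply: (Rmult_le_reg_r (1 + x)); first lra.
  field_simplify; lra.
rewrite /plus /=; lra.
Qed.

Lemma rpow_ge0 t p : 0 <= rpow t p.
Proof. by rewrite /rpow; case: Rle_dec => _; [lra | apply/Rlt_le/Rpower_gt0]. Qed.

Lemma rpow_Sr t p : 0 <= t -> rpow t (p + 1) = rpow t p * t.
Proof.
rewrite /rpow; case: Rle_dec => h ht; first by rewrite Rmult_0_l.
by rewrite Rpower_Sr 1?Rmult_comm //; lra.
Qed.

(* With t fixed, [RInt (scaled_kernel q t) e (/ e)] is [t^q] times the kernel integral over
   [e/t, 1/(e t)]; these bound the two pieces outside [e, 1/e]. *)
Definition tail_const q t :=
  Rabs (1 - / t) * (Rpower (Rmin 1 (/ t)) (q - 1) + Rpower (Rmin 1 (/ t)) (q - 2)).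
Definition tail_rate q e := Rpower e q + Rpower e (1 - q).

Lemma tail_const_ge0 q t : 0 <= tail_const q t.
Proof.
apply: Rmult_le_pos; first exact: Rabs_pos.
by apply: Rplus_le_le_0_compat; apply/Rlt_le/Rpower_gt0.
Qed.

Lemma RInt_scaled_kernel_approx q t e : 0 < q < 1 -> 0 <= t -> 0 < e ->
  Rabs (RInt (scaled_kernel q t) e (/ e) - rpow t q * RInt (kernel q) e (/ e))
    <= rpow t q * tail_const q t * tail_rate q e.
Proof.
move=> hq ht he; rewrite /rpow; case: Rle_dec => [t0 | /Rnot_le_lt t0].
  have -> : t = 0 by lra.
  rewrite (RInt_ext _ (fun _ => 0)); last first.
    by move=> s _; rewrite /scaled_kernel /Rdiv !Rmult_0_l.
  rewrite RInt_const /scal /= /mult /= !Rmult_0_l !Rmult_0_r Rminus_0_r Rabs_R0; lra.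
have hie : 0 < / e by apply: Rinv_0_lt_compat.
have hit : 0 < / t by apply: Rinv_0_lt_compat.
set m := Rmin 1 (/ t).
have hm : 0 < m by apply: Rmin_pos; lra.
have hm1 : m <= 1 by apply: Rmin_l.
have hmt : m <= / t by apply: Rmin_r.
have ex a b : 0 < a -> 0 < b -> ex_RInt (kernel q) a b by apply: ex_RInt_kernel.
have low_tail : Rabs (RInt (kernel q) (e / t) e)
    <= Rpower e q * (Rabs (1 - / t) * Rpower m (q - 1)).
  apply: Rle_trans (abs_RInt_kernel_le q _ _ (e * m) (q - 1) _ _ _ _ _) _.
  - exact: Rmult_lt_0_compat.
  - by rewrite /Rdiv; apply: Rmult_le_compat_l; lra.
  - by rewrite -[X in _ <= X]Rmult_1_r; apply: Rmult_le_compat_l; lra.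
  - lra.
  - by move=> s hs; apply: kernel_le_pow.
  have -> : Rpower e q = e * Rpower e (q - 1) by rewrite -Rpower_Sr //; f_equal; ring.
  rewrite -Rpower_mult_distr //.
  rewrite (_ : e - e / t = e * (1 - / t)); last by field; lra.
  rewrite Rabs_mult (Rabs_pos_eq e); [right; ring | lra].
have high_tail : Rabs (RInt (kernel q) (/ e) (/ e / t))
    <= Rpower e (1 - q) * (Rabs (1 - / t) * Rpower m (q - 2)).
  apply: Rle_trans (abs_RInt_kernel_le q _ _ (/ e * m) (q - 2) _ _ _ _ _) _.
  - exact: Rmult_lt_0_compat.
  - by rewrite -[X in _ <= X]Rmult_1_r; apply: Rmult_le_compat_l; lra.
  - by rewrite /Rdiv; apply: Rmult_le_compat_l; lra.
  - lra.
  - by move=> s hs; apply: kernel_le_pow_pred.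
  have -> : Rpower e (1 - q) = / e * Rpower (/ e) (q - 2).
    rewrite -Rpower_Sr // /Rpower ln_Rinv //; f_equal; ring.
  rewrite -Rpower_mult_distr //.
  rewrite (_ : / e / t - / e = / e * - (1 - / t)); last by field; lra.
  rewrite Rabs_mult Rabs_Ropp (Rabs_pos_eq (/ e)); [right; ring | lra].
have het : 0 < e / t by apply: Rdiv_lt_0_compat.
have hiet : 0 < / e / t by apply: Rdiv_lt_0_compat.
rewrite RInt_scaled_kernel //.
rewrite -(RInt_Chasles (kernel q) (e / t) e (/ e / t)); try (apply: ex; lra).
rewrite -(RInt_Chasles (kernel q) e (/ e) (/ e / t)); try (apply: ex; lra).
rewrite /plus /= /tail_const /tail_rate -/m.
have -> : forall x y z, Rpower t q * (x + (z + y)) - Rpower t q * z = Rpower t q * (x + y)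
  by move=> x y z; ring.
rewrite Rabs_mult (Rabs_pos_eq (Rpower t q)); last exact/Rlt_le/Rpower_gt0.
rewrite Rmult_assoc; apply: Rmult_le_compat_l; first exact/Rlt_le/Rpower_gt0.
apply: Rle_trans (Rabs_triang _ _) _.
apply: Rle_trans (Rplus_le_compat _ _ _ _ low_tail high_tail) _.
have := Rpower_gt0 m (q - 1); have := Rpower_gt0 m (q - 2).
have := Rpower_gt0 e q; have := Rpower_gt0 e (1 - q); have := Rabs_pos (1 - / t).
move: (Rpower m (q - 1)) (Rpower m (q - 2)) (Rpower e q) (Rpower e (1 - q)) (Rabs (1 - / t)).
move=> m1 m2 e1 e2 c *.
have : 0 <= c * (m1 * e2 + m2 * e1) by apply: Rmult_le_pos; nra.
lra.
Qed.

Lemma tail_rate_small q eta : 0 < q < 1 -> 0 < eta ->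
  exists e, 0 < e <= / 2 /\ tail_rate q e < 2 * eta.
Proof.
move=> hq heta.
have root p : 0 < p -> Rpower (Rpower eta (/ p)) p = eta.
  by move=> hp; rewrite Rpower_mult Rinv_l ?Rpower_1 //; lra.
set a := Rpower eta (/ q); set b := Rpower eta (/ (1 - q)).
have ha : 0 < a := Rpower_gt0 _ _; have hb : 0 < b := Rpower_gt0 _ _.
exists (Rmin (/ 2) (Rmin (a / 2) (b / 2))); set e := Rmin _ _.
have he2 : e <= a / 2 by apply: Rle_trans (Rmin_r _ _) (Rmin_l _ _).
have he3 : e <= b / 2 by apply: Rle_trans (Rmin_r _ _) (Rmin_r _ _).
have he0 : 0 < e by apply: Rmin_pos; [lra | apply: Rmin_pos; lra].
split; first by split; [lra | apply: Rmin_l].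
have small p : 0 < p -> e <= Rpower eta (/ p) / 2 -> Rpower e p < eta.
  move=> hp hep; rewrite -{1}(root p hp); apply: Rlt_Rpower_l; first lra.
  by split; [lra | have := Rpower_gt0 eta (/ p); lra].
have := small q (proj1 hq) he2; have := small (1 - q) ltac:(lra) he3.
rewrite /tail_rate; lra.
Qed.

Fixpoint lcomb (l : seq (R * R)) (f : R -> R) : R :=
  if l is (c, x) :: l' then c * f x + lcomb l' f else 0.

Definition negl (l : seq (R * R)) := [seq (- p.1, p.2) | p <- l].
Definition absl (l : seq (R * R)) := [seq (Rabs p.1, p.2) | p <- l].

Lemma lcomb_cat l1 l2 f : lcomb (l1 ++ l2) f = lcomb l1 f + lcomb l2 f.
Proof. by elim: l1 => [|[c x] l IH] /=; rewrite ?IH; ring. Qed.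

Lemma lcomb_negl l f : lcomb (negl l) f = - lcomb l f.
Proof. by elim: l => [|[c x] l IH] /=; rewrite ?IH; ring. Qed.

Lemma lcomb_mulr l f k : lcomb l (fun x => f x * k) = lcomb l f * k.
Proof. by elim: l => [|[c x] l IH] /=; rewrite ?IH; ring. Qed.

Lemma lcomb_absl_ge0 (l : seq (R * R)) (f : R -> R) :
  (forall p, p \in l -> 0 <= f p.2) -> 0 <= lcomb (absl l) f.
Proof.
elim: l => [|[c x] l IH] hf /=; first lra.
apply: Rplus_le_le_0_compat; last by apply: IH => p hp; apply: hf; rewrite inE hp orbT.
by apply: Rmult_le_pos; [apply: Rabs_pos | apply: (hf (c, x)); rewrite inE eqxx].
Qed.

Lemma abs_lcomb_sub_le (l : seq (R * R)) (f g h : R -> R) :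
  (forall p, p \in l -> Rabs (f p.2 - g p.2) <= h p.2) ->
  Rabs (lcomb l f - lcomb l g) <= lcomb (absl l) h.
Proof.
elim: l => [|[c x] l IH] hfg /=; first by rewrite Rminus_0_r Rabs_R0; lra.
have -> : c * f x + lcomb l f - (c * g x + lcomb l g)
    = c * (f x - g x) + (lcomb l f - lcomb l g) by ring.
apply: Rle_trans (Rabs_triang _ _) (Rplus_le_compat _ _ _ _ _ _).
  rewrite Rabs_mult; apply: Rmult_le_compat_l; first exact: Rabs_pos.
  by apply: (hfg (c, x)); rewrite inE eqxx.
by apply: IH => p hp; apply: hfg; rewrite inE hp orbT.
Qed.

Lemma RInt_lcomb q (l : seq (R * R)) a b :
  0 < a -> 0 < b -> (forall p, p \in l -> 0 <= p.2) ->
  ex_RInt (fun s => lcomb l (fun t => scaled_kernel q t s)) a b /\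
  RInt (fun s => lcomb l (fun t => scaled_kernel q t s)) a b
    = lcomb l (fun t => RInt (scaled_kernel q t) a b).
Proof.
move=> ha hb; elim: l => [|[c x] l IH] hl /=.
  by split; [apply: ex_RInt_const | rewrite RInt_const /scal /= /mult /= Rmult_0_r].
have [ex_l eq_l] : ex_RInt (fun s => lcomb l (fun t => scaled_kernel q t s)) a b /\
    RInt (fun s => lcomb l (fun t => scaled_kernel q t s)) a b
      = lcomb l (fun t => RInt (scaled_kernel q t) a b).
  by apply: IH => p hp; apply: hl; rewrite inE hp orbT.
have ex_x : ex_RInt (scaled_kernel q x) a b.
  by apply: ex_RInt_scaled_kernel => //; apply: (hl (c, x)); rewrite inE eqxx.
have ex_cx : ex_RInt (fun s => scal c (scaled_kernel q x s)) a b by apply: ex_RInt_scal.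
split; first exact: (ex_RInt_plus _ _ _ _ ex_cx ex_l).
rewrite -[RHS]/(plus (scal c (RInt (scaled_kernel q x) a b)) _) -eq_l -RInt_scal //.
exact: RInt_plus.
Qed.

Lemma lcomb_rpow_le0 q (l : seq (R * R)) :
  0 < q < 1 -> (forall p, p \in l -> 0 <= p.2) ->
  (forall s, 0 < s -> lcomb l (fun t => t / (t + s)) <= 0) ->
  lcomb l (fun t => rpow t q) <= 0.
Proof.
move=> hq hl hres.
set S := lcomb l _; set M := lcomb (absl l) (fun t => rpow t q * tail_const q t).
have hM : 0 <= M.
  by apply: lcomb_absl_ge0 => p _; apply: Rmult_le_pos; [apply: rpow_ge0 | apply: tail_const_ge0].
have truncated e : 0 < e <= / 2 ->
    S * RInt (kernel q) e (/ e) <= M * tail_rate q e.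
  move=> he; have hie : 2 <= / e by rewrite -[2]Rinv_inv; apply: Rinv_le_contravar; lra.
  have [ex_int eq_int] := RInt_lcomb q l e (/ e) ltac:(lra) ltac:(lra) hl.
  have int_le0 : lcomb l (fun t => RInt (scaled_kernel q t) e (/ e)) <= 0.
    rewrite -eq_int -(Rmult_0_r (/ e - e)) -[_ * 0]/(scal _ 0) -RInt_const.
    apply: RInt_le => //; [lra | exact: ex_RInt_const | move=> s hs].
    rewrite (_ : lcomb l _ = lcomb l (fun t => t / (t + s)) * Rpower s (q - 1)).
      by have := hres s ltac:(lra); have := Rpower_gt0 s (q - 1); nra.
    by rewrite -lcomb_mulr.
  have approx := abs_lcomb_sub_le l (fun t => RInt (scaled_kernel q t) e (/ e))
    (fun t => rpow t q * RInt (kernel q) e (/ e))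
    (fun t => rpow t q * tail_const q t * tail_rate q e).
  rewrite !lcomb_mulr -/S -/M in approx.
  have := approx (fun p hp => RInt_scaled_kernel_approx q p.2 e hq (hl p hp) ltac:(lra)).
  by move/Rabs_le_between; lra.
apply: Rnot_lt_le => hS.
set eta := S / (8 * (M + 1)).
have heta : 0 < eta by apply: Rdiv_lt_0_compat; lra.
have [e [he hrate]] := tail_rate_small q eta hq heta.
have := truncated e he; have := RInt_kernel_ge q e hq he.
have : M * (2 * eta) < S / 4.
  by rewrite /eta; apply: (Rmult_lt_reg_r (8 * (M + 1))); [lra | field_simplify; nra].
nra.
Qed.

Lemma lcomb_rpow_le q (l1 l2 : seq (R * R)) : 0 < q < 1 ->
  (forall p, p \in l1 ++ l2 -> 0 <= p.2) ->
  (forall s, 0 < s -> lcomb l1 (fun t => t / (t + s)) <= lcomb l2 (fun t => t / (t + s))) ->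
  lcomb l1 (fun t => rpow t q) <= lcomb l2 (fun t => rpow t q).
Proof.
move=> hq hl hres.
suff : lcomb (l1 ++ negl l2) (fun t => rpow t q) <= 0 by rewrite lcomb_cat lcomb_negl; lra.
apply: lcomb_rpow_le0 => // [p | s hs].
  rewrite mem_cat => /orP[hp | /mapP[p' hp' ->]]; first by apply: hl; rewrite mem_cat hp.
  by apply: (hl p'); rewrite mem_cat hp' orbT.
by have := hres s hs; rewrite lcomb_cat lcomb_negl; lra.
Qed.

Local Open Scope ring_scope.

Ltac Rops := rewrite -?RminusE -?RplusE -?RmultE -?RoppE -?R0E -?R1E.

Section Spectral.
Context {n : nat}.
Implicit Types (U V W N M P Q : 'M[R]_n) (a b g p r : 'I_n -> R) (s : R).

Definition specmx U p := U *m diag_mx (\row_k p k) *m U^T.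
Definition orthmx U := U *m U^T = 1%:M /\ U^T *m U = 1%:M.
(* Testing against square matrices instead of vectors gives the same notion, in the form the trace
   inequalities below use. *)
Definition psdmx P := forall N, 0 <= \tr (N^T *m P *m N).

Lemma specmxE U p i j : specmx U p i j = \sum_k U i k * p k * U j k.
Proof. by rewrite mxE; apply: eq_bigr => k _; rewrite mul_mx_diag !mxE. Qed.

Lemma eq_specmx {U p r} : p =1 r -> specmx U p = specmx U r.
Proof. by move=> e; congr (_ *m diag_mx _ *m _); apply/rowP => k; rewrite !mxE e. Qed.

Lemma trmx_specmx U p : (specmx U p)^T = specmx U p.
Proof. by rewrite /specmx !trmx_mul trmxK tr_diag_mx mulmxA. Qed.

Lemma specmxD U p r : specmx U p + specmx U r = specmx U (fun k => p k + r k).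
Proof.
apply/matrixP => i j; rewrite mxE !specmxE -big_split; apply: eq_bigr => k _ /=.
by rewrite mulrDr mulrDl.
Qed.

Lemma specmxZ U c p : c *: specmx U p = specmx U (fun k => c * p k).
Proof.
apply/matrixP => i j; rewrite mxE !specmxE mulr_sumr; apply: eq_bigr => k _.
by rewrite !mulrA (mulrC c).
Qed.

Lemma specmx_const {U} c : orthmx U -> specmx U (fun _ => c) = c%:M.
Proof.
case=> UUt _; rewrite /specmx (_ : \row_k c = const_mx c); last by apply/rowP => k; rewrite !mxE.
by rewrite diag_const_mx mul_mx_scalar -scalemxAl UUt scalemx1.
Qed.

Lemma specmx_mul U p r : orthmx U -> specmx U p *m specmx U r = specmx U (fun k => p k * r k).
Proof.
case=> _ UtU; rewrite /specmx -!mulmxA (mulmxA U^T) UtU mul1mx.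
rewrite [diag_mx _ *m (diag_mx _ *m _)]mulmxA mulmx_diag !mulmxA.
by congr (_ *m diag_mx _ *m _); apply/rowP => k; rewrite !mxE.
Qed.

Lemma psdmx_specmx U r : (forall k, 0 <= r k) -> psdmx (specmx U r).
Proof.
move=> r_ge0 N; rewrite (_ : N^T *m _ *m N = (U^T *m N)^T *m diag_mx (\row_k r k) *m (U^T *m N)).
  rewrite /mxtrace; apply: sumr_ge0 => i _; rewrite mxE; apply: sumr_ge0 => j _.
  by rewrite mul_mx_diag !mxE mulrAC mulr_ge0 // -expr2 sqr_ge0.
by rewrite /specmx trmx_mul trmxK !mulmxA.
Qed.

(* tr (M^T P^-1 M) is the maximum over Y of 2 tr (M^T Y) - tr (Y^T P Y), attained at Y = P^-1 M. *)
Lemma tr_inv_antimono {P P' Q Q'} M :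
  psdmx P -> psdmx (P' - P) -> P *m Q = 1%:M -> Q *m P = 1%:M -> Q^T = Q ->
  P' *m Q' = 1%:M -> Q'^T = Q' ->
  \tr (M^T *m Q' *m M) <= \tr (M^T *m Q *m M).
Proof.
move=> psdP psdP'P PQ QP symQ P'Q' symQ'.
set Y := Q' *m M.
have tY : \tr (Y^T *m M) = \tr (M^T *m Q' *m M).
  by rewrite -mxtrace_tr trmx_mul trmxK /Y mulmxA.
have tY' : \tr (Y^T *m P' *m Y) = \tr (M^T *m Q' *m M).
  by rewrite /Y trmx_mul symQ' -!mulmxA (mulmxA P') P'Q' mul1mx.
have complete_square : \tr ((Y - Q *m M)^T *m P *m (Y - Q *m M))
    = \tr (Y^T *m P *m Y) - \tr (Y^T *m M) - \tr (Y^T *m M) + \tr (M^T *m Q *m M).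
  have -> : (Y - Q *m M)^T = Y^T - M^T *m Q by rewrite raddfB /= (trmx_mul Q) symQ.
  rewrite !(mulmxBl, mulmxBr) !linearB /= -[M^T *m Q *m P]mulmxA QP mulmx1.
  rewrite (mulmxA (Y^T *m P) Q M) -(mulmxA Y^T P Q) PQ mulmx1 (mulmxA M^T Q M).
  rewrite -[\tr (M^T *m Y)]mxtrace_tr (trmx_mul M^T Y) trmxK.
  by rewrite opprB addrA addrAC.
have h1 := psdP (Y - Q *m M); have h2 := psdP'P Y.
rewrite complete_square tY in h1; rewrite mulmxBr mulmxBl linearB /= tY' in h2.
move: h1 h2; move: (\tr (Y^T *m P *m Y)) (\tr (M^T *m Q' *m M)) (\tr (M^T *m Q *m M)).
move=> a b d /RleP h1 /RleP h2; apply/RleP; move: h1 h2; Rops; lra.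
Qed.

Definition resolvent U p s := specmx U (fun k => (p k + s)^-1).

Lemma specmx_shift {U} p s : orthmx U -> specmx U (fun k => p k + s) = specmx U p + s%:M.
Proof. by move=> oU; rewrite -(specmx_const s oU) specmxD. Qed.

Lemma shift_resolvent {U p s} : orthmx U -> (forall k, 0 <= p k) -> 0 < s ->
  specmx U (fun k => p k + s) *m resolvent U p s = 1%:M /\
  resolvent U p s *m specmx U (fun k => p k + s) = 1%:M.
Proof.
move=> oU p0 s0; rewrite !specmx_mul // -(specmx_const 1 oU).
have nz k : p k + s != 0 by rewrite lt0r_neq0 // ltr_wpDl.
by split; apply: eq_specmx => k; rewrite ?mulfV ?mulVf.
Qed.

Lemma specmx_ratio {U p s} : orthmx U -> (forall k, 0 <= p k) -> 0 < s ->
  specmx U (fun k => p k / (p k + s)) = 1%:M - s *: resolvent U p s.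
Proof.
move=> oU p0 s0; rewrite specmxZ -(specmx_const 1 oU) -scaleN1r specmxZ specmxD.
apply: eq_specmx => k; have nz : p k + s != 0 by rewrite lt0r_neq0 // ltr_wpDl.
by rewrite mulN1r -[X in X - _](mulfV nz) -mulrBl addrK.
Qed.

Lemma tr_contract R' A K s : psdmx (1%:M - s *: R') -> A^T = A -> K^T = K ->
  s * \tr (R' *m A *m (K *m K) *m A) <= \tr (A *m (K *m K) *m A).
Proof.
move=> psdR symA symK.
have trY : (A *m K)^T = K *m A by rewrite trmx_mul symA symK.
have e1 : \tr (R' *m A *m (K *m K) *m A) = \tr ((A *m K)^T *m R' *m (A *m K)).
  rewrite trY (mulmxA _ A K) [RHS]mxtrace_mulC !mulmxA.
  by rewrite -(mulmxA (K *m K *m A) R' A) [RHS]mxtrace_mulC !mulmxA.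
have e2 : \tr (A *m (K *m K) *m A) = \tr ((A *m K)^T *m (A *m K)).
  rewrite trY (mulmxA _ A K) [RHS]mxtrace_mulC !mulmxA.
  by rewrite -mulmxA mxtrace_mulC !mulmxA.
have := psdR (A *m K).
rewrite mulmxBr mulmxBl mulmx1 -scalemxAr -scalemxAl linearB linearZ /=.
by rewrite e1 e2 subr_ge0.
Qed.

Lemma tr_resolvent_le {U V W a b g} s :
  orthmx U -> orthmx V -> orthmx W ->
  (forall k, 0 <= a k) -> (forall k, 0 <= b k) -> (forall k, 0 <= g k) -> 0 < s ->
  specmx U a + specmx V b = specmx W g ->
  \tr (specmx W (fun k => g k / (g k + s)) *m specmx U a)
    <= \tr (specmx U (fun k => a k / (a k + s)) *m specmx U a)
       + \tr (specmx V (fun k => b k / (b k + s)) *m specmx U a).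
Proof.
move=> oU oV oW a0 b0 g0 s0 sumAB.
set A := specmx U a; set Ra := resolvent U a s; set Rb := resolvent V b s.
set Rc := resolvent W g s.
have [PaRa RaPa] := shift_resolvent oU a0 s0.
have [_ RbPb] := shift_resolvent oV b0 s0.
have [PcRc _] := shift_resolvent oW g0 s0.
have symA : A^T = A := trmx_specmx U a.
have shiftC : specmx W (fun k => g k + s) = A + specmx V (fun k => b k + s).
  by rewrite !specmx_shift // -sumAB addrA.
have resolvent_eq : Rb - Rc = Rb *m A *m Rc.
  have -> : A = specmx W (fun k => g k + s) - specmx V (fun k => b k + s) by rewrite shiftC addrK.
  by rewrite mulmxBr mulmxBl -mulmxA PcRc mulmx1 RbPb mul1mx.
have contract : s * \tr (Rb *m A *m Rc *m A) <= \tr (A *m Rc *m A).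
  set K := specmx W (fun k => Num.sqrt (g k + s)^-1).
  have <- : K *m K = Rc.
    rewrite specmx_mul //; apply: eq_specmx => k; rewrite -expr2 sqr_sqrtr // invr_ge0.
    exact: addr_ge0 (g0 k) (ltW s0).
  apply: tr_contract (trmx_specmx _ _) => //; rewrite -(specmx_ratio oV b0 s0).
  by apply: psdmx_specmx => k; apply: divr_ge0 (b0 k) (addr_ge0 (b0 k) (ltW s0)).
have antimono : \tr (A *m Rc *m A) <= \tr (A *m Ra *m A).
  rewrite -{1 3}symA; apply: (tr_inv_antimono A _ _ PaRa RaPa _ PcRc).
  - by apply: psdmx_specmx => k; apply: addr_ge0 (a0 k) (ltW s0).
  - by rewrite shiftC !specmx_shift // [A + _]addrC addrKA addrK; apply: psdmx_specmx.
  - exact: trmx_specmx.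
  - exact: trmx_specmx.
have KaA : specmx U (fun k => a k / (a k + s)) *m A = A *m Ra *m A.
  by rewrite !specmx_mul //; apply: eq_specmx => k; rewrite mulrAC.
have scaled_eq : s * \tr (Rb *m A) - s * \tr (Rc *m A) = s * \tr (Rb *m A *m Rc *m A).
  by rewrite -mulrBr -linearB -mulmxBl resolvent_eq.
rewrite KaA !specmx_ratio // !mulmxBl !mul1mx -!scalemxAl !linearB !linearZ /=.
move: contract antimono scaled_eq.
move: (\tr (Rb *m A *m Rc *m A)) (\tr (A *m Rc *m A)) (\tr (A *m Ra *m A)).
move: (\tr (Rb *m A)) (\tr (Rc *m A)) (\tr A) => u v t x y z /RleP h1 /RleP h2 h3.
apply/RleP; move: h1 h2 h3; Rops; lra.
Qed.

End Spectral.

Definition spec_weights {n} (U A : 'M[R]_n) (g : 'I_n -> R) : seq (R * R) :=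
  [seq ((U^T *m A *m U) k k, g k) | k <- enum 'I_n].

Lemma lcomb_map (I : Type) (r : seq I) (c x : I -> R) f :
  lcomb [seq (c i, x i) | i <- r] f = \sum_(i <- r) c i * f (x i).
Proof. by elim: r => [|i r IH] /=; rewrite ?big_nil ?big_cons ?IH. Qed.

Lemma tr_specmx_mul n (U A : 'M[R]_n) (g : 'I_n -> R) (f : R -> R) :
  \tr (specmx U (fun k => f (g k)) *m A) = lcomb (spec_weights U A g) f.
Proof.
rewrite lcomb_map big_enum /= /specmx -!mulmxA mxtrace_mulC -mulmxA /mxtrace.
by apply: eq_bigr => k _; rewrite mul_diag_mx mxE mulrC mulmxA; congr (_ * _); rewrite mxE.
Qed.

Lemma rsum_big n f : rsum n f = \sum_(i < n) f i.
Proof. by elim: n => [|n IH] /=; rewrite ?big_ord0 // big_ord_recr IH. Qed.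

Lemma ltn_ord_lt {d} (i : 'I_d) : lt i d.
Proof. exact/ssrnat.ltP/ltn_ord. Qed.

Definition to_mx d (m : mat) : 'M[R]_d := \matrix_(i < d, j < d) m i j.

Lemma trace_to_mx d P : trace d P = \tr (to_mx d P).
Proof. by rewrite /trace rsum_big; apply: eq_bigr => i _; rewrite mxE. Qed.

Lemma trace_mmul_to_mx d P A : trace d (mmul d P A) = \tr (to_mx d P *m to_mx d A).
Proof.
rewrite /trace rsum_big; apply: eq_bigr => i _; rewrite /mmul rsum_big !mxE.
by apply: eq_bigr => k _; rewrite !mxE.
Qed.

Lemma orthmx_to_mx {d U} : Defs.orthogonal d U -> orthmx (to_mx d U).
Proof.
have idmE (i j : 'I_d) : idm i j = (1%:M : 'M[R]_d) i j.
  rewrite /idm !mxE; case: (eqVneq i j) => [-> | ne]; first by rewrite Nat.eqb_refl.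
  by case: Nat.eqb_spec => // /ord_inj eij; rewrite eij eqxx in ne.
case=> UUt UtU; split; apply/matrixP => i j; rewrite -idmE.
  rewrite -(UUt i j (ltn_ord_lt i) (ltn_ord_lt j)) mxE /mmul rsum_big.
  by apply: eq_bigr => k _; rewrite !mxE.
rewrite -(UtU i j (ltn_ord_lt i) (ltn_ord_lt j)) mxE /mmul rsum_big.
by apply: eq_bigr => k _; rewrite !mxE.
Qed.

Lemma to_mx_spectral {d U} {lam : nat -> R} {M} :
  (forall i j, lt i d -> lt j d -> M i j = rsum d (fun k => U i k * lam k * U j k)) ->
  to_mx d M = specmx (to_mx d U) (fun k => lam k).
Proof.
move=> eM; apply/matrixP => i j; rewrite specmxE mxE (eM i j (ltn_ord_lt i) (ltn_ord_lt j)).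
by rewrite rsum_big; apply: eq_bigr => k _; rewrite !mxE.
Qed.

Local Open Scope R_scope.

Lemma spec_weights_ge0 n (U A : 'M[R]_n) (g : 'I_n -> R) p :
  (forall k, 0 <= g k) -> p \in spec_weights U A g -> 0 <= p.2.
Proof. by move=> g0 /mapP[k _ ->]; apply: g0. Qed.

(* Positive semidefiniteness of A and B is already implied by the spectral data in [is_mpow]. *)
Theorem mainTheorem19 (q : R) (d : nat) (A B PAB PA1 PB : mat) :
  0 < q < 1 ->
  psd d A -> psd d B ->
  is_mpow d q (madd A B) PAB ->
  is_mpow d (q + 1) A PA1 ->
  is_mpow d q B PB ->
  trace d (mmul d PAB A) <= trace d PA1 + trace d (mmul d PB A).
Proof.
move=> hq _ _ [W [g [oW [g0 [eC ePAB]]]]] [U [a [oU [a0 [eA ePA1]]]]] [V [b [oV [b0 [eB ePB]]]]].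
have {}oW := orthmx_to_mx oW; have {}oU := orthmx_to_mx oU; have {}oV := orthmx_to_mx oV.
have {}g0 (k : 'I_d) := g0 k (ltn_ord_lt k); have {}a0 (k : 'I_d) := a0 k (ltn_ord_lt k).
have {}b0 (k : 'I_d) := b0 k (ltn_ord_lt k).
have sumAB : (to_mx d A + to_mx d B)%R = to_mx d (madd A B) by apply/matrixP => i j; rewrite !mxE.
rewrite (to_mx_spectral eA) (to_mx_spectral eB) (to_mx_spectral eC) in sumAB.
rewrite !trace_mmul_to_mx trace_to_mx (to_mx_spectral ePAB) (to_mx_spectral ePB) (to_mx_spectral ePA1).
rewrite (to_mx_spectral eA) (eq_specmx (fun k => rpow_Sr _ q (a0 k))) -specmx_mul //.
rewrite (tr_specmx_mul _ _ _ (fun k : 'I_d => g k) (rpow^~ q)).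
rewrite (tr_specmx_mul _ _ _ (fun k : 'I_d => a k) (rpow^~ q)).
rewrite (tr_specmx_mul _ _ _ (fun k : 'I_d => b k) (rpow^~ q)) -lcomb_cat.
apply: lcomb_rpow_le => // [p | s s0].
  rewrite !mem_cat => /or3P[]; [exact: spec_weights_ge0 g0 | exact: spec_weights_ge0 a0 |].
  exact: spec_weights_ge0 b0.
rewrite lcomb_cat -!tr_specmx_mul; apply/RleP.
apply: (tr_resolvent_le s oU oV oW _ _ _ _ sumAB) => [k | k | k |].
- exact/RleP/a0.
- exact/RleP/b0.
- exact/RleP/g0.
- exact/RltP.
Qed.
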